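(* Let $\xi\in\Xi^*_{T1}\cup\Xi^*_{T2}$. Then $\xi$ is a product correlation plan, i.e. $\xi[\sigma_{T1},\sigma_{T2}]=\xi[\sigma_{T1},\varnothing]\cdot\xi[\varnothing,\sigma_{T2}]$ for all $(\sigma_{T1},\sigma_{T2})\in\Sigma_{T1}\bowtie\Sigma_{T2}$.
   Context: A finite extensive-form game is played on a tree; each internal node belongs to one of the players $T1,T2,O$ or to chance. The nodes of player $i$ are partitioned into information sets $\mathcal I_i$; all nodes of $I\in\mathcal I_i$ share the action set $A_I$. Perfect recall is assumed. The sequences of player $i$ are $\Sigma_i=\{(I,a):I\in\mathcal I_i,a\in A_I\}\cup\{\varnothing\}$. For an information set $I$ of player $i$, $\sigma(I)$ denotes the last pair $(I',a')$ of player $i$ on the root-to-$I$ path, or $\varnothing$ if $i$ does not act before $I$. Two information sets $I_i\in\mathcal I_i$, $I_j\in\mathcal I_j$ are connected ($I_i\rightleftharpoons I_j$) if there exist $v\in I_i$, $w\in I_j$ such that the root-to-$v$ path passes through $w$ or vice versa. A pair $(\sigma_i,\sigma_j)$ is relevant ($\sigma_i\bowtie\sigma_j$) if one of them is $\varnothing$ or $\sigma_i=(I_i,a_i)$, $\sigma_j=(I_j,a_j)$ with $I_i\rightleftharpoons I_j$; $\Sigma_{T1}\bowtie\Sigma_{T2}$ is the set of relevant pairs. Similarly $\sigma_i\bowtie I_j$ if $\sigma_i=\varnothing$ or $\sigma_i=(I_i,a_i)$ with $I_i\rightleftharpoons I_j$. The von Stengel–Forges polytope $\mathcal V_T$ is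 the set of nonnegative vectors $\xi$ indexed by relevant pairs with: $\xi[\varnothing,\varnothing]=1$; $\sum_{a\in A_{I}}\xi[(I,a),\sigma_{T2}]=\xi[\sigma(I),\sigma_{T2}]$ for all $I\in\mathcal I_{T1}$, $\sigma_{T2}\in\Sigma_{T2}$ with $I\bowtie\sigma_{T2}$; $\sum_{b\in A_{J}}\xi[\sigma_{T1},(J,b)]=\xi[\sigma_{T1},\sigma(J)]$ for all $J\in\mathcal I_{T2}$, $\sigma_{T1}\in\Sigma_{T1}$ with $\sigma_{T1}\bowtie J$. The semi-randomized correlation plans are $\Xi^*_{T1}=\{\xi\in\mathcal V_T:\xi[\varnothing,\sigma_{T2}]\in\{0,1\}\ \forall\sigma_{T2}\in\Sigma_{T2}\}$ and $\Xi^*_{T2}=\{\xi\in\mathcal V_T:\xi[\sigma_{T1},\varnothing]\in\{0,1\}\ \forall\sigma_{T1}\in\Sigma_{T1}\}$. *)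

From HB Require Import structures.
From mathcomp Require Import all_boot all_order all_algebra.
Local Open Scope ring_scope.
Set Implicit Arguments. Unset Strict Implicit. Unset Printing Implicit Defensive.
Import Order.TTheory GRing.Theory Num.Theory.

(* Finite extensive-form games with players T1, T2, O (constructor PO)
   and chance. *)

Inductive player := T1 | T2 | PO | Chance.

Definition player_eqb (p q : player) : bool :=
  match p, q with
  | T1, T1 | T2, T2 | PO, PO | Chance, Chance => true
  | _, _ => false end.

Lemma player_eqP : Equality.axiom player_eqb.
Proof. by case; case; constructor. Qed.

HB.instance Definition _ := hasDecEq.Build player player_eqP.

(* A game tree on a finite node type [V], information-set labels [I]
   and action labels [A].
   - [par v]   : parent of v (None exactly for the root);
   - [owner v] : who acts at v (None for terminal nodes);
   - [info v]  : information set of v (None for chance and terminal nodes);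
   - [act c]   : the action label of the edge from [par c] to c. *)
Record game (V I A : finType) := Game {
  root : V;
  par : V -> option V;
  owner : V -> option player;
  info : V -> option I;
  act : V -> A }.

Section Game.
Variables (V I A : finType) (G : game V I A).

Local Notation par := (par G).
Local Notation owner := (owner G).
Local Notation info := (info G).
Local Notation act := (act G).

Definition anc (u v : V) : Prop :=
  exists n, iter n (fun x => obind par x) (Some v) = Some u.

(* the sequence of (infoset, action) pairs of player p on the root-to-v
   path, from the root downwards (fuel #|V| exceeds the depth). *)
Fixpoint hist_aux (p : player) (n : nat) (v : V) : seq (I * A) :=
  match n with
  | 0 => [::]
  | n'.+1 =>
    match par v with
    | None => [::]
    | Some u =>
      let h := hist_aux p n' u in
      match info u with
      | Some J => if owner u == Some p then rcons h (J, act v) else h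
      | None => h
      end
    end
  end.

Definition hist (p : player) (v : V) : seq (I * A) := hist_aux p #|V| v.

(* sigma(I) computed at a node v of I: last pair of player p, or empty *)
Definition last_seq (s : seq (I * A)) : option (I * A) :=
  if s is x :: s' then Some (last x s') else None.

Definition sigma_at (p : player) (v : V) : option (I * A) := last_seq (hist p v).

Definition wf_game : Prop :=
  [/\
      par (root G) = None,
      (forall v, anc (root G) v),
      (forall v, (owner v == None) = ~~ [exists c, par c == Some v]),
      (forall v, (info v != None) =
         (owner v \in [:: Some T1; Some T2; Some PO]))
    & (forall u w J, info u = Some J -> info w = Some J -> owner u = owner w)]
  /\ [/\
      (forall c c' u, par c = Some u -> par c' = Some u -> act c = act c' -> c = c'),
      (forall u w J a, info u = Some J -> info w = Some J ->
         (exists c, par c = Some u /\ act c = a) <->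
         (exists c, par c = Some w /\ act c = a))
    &
      (forall u w J p, info u = Some J -> info w = Some J -> owner u = Some p ->
         hist p u = hist p w)].

Definition inA (J : I) (a : A) : bool :=
  [exists v, (info v == Some J) && [exists c, (par c == Some v) && (act c == a)]].

Definition belongs (J : I) (p : player) : Prop :=
  exists v, info v = Some J /\ owner v = Some p.

(* sequences of player p: the empty sequence (None) or pairs (J, a) *)
Definition is_seq (p : player) (s : option (I * A)) : Prop :=
  match s with
  | None => True
  | Some (J, a) => belongs J p /\ inA J a
  end.

Definition connected (J K : I) : Prop :=
  exists v w, [/\ info v = Some J, info w = Some K & (anc w v \/ anc v w)].

Definition relevant (s1 s2 : option (I * A)) : Prop :=
  s1 = None \/ s2 = None \/
  exists J1 a1 J2 a2, [/\ s1 = Some (J1, a1), s2 = Some (J2, a2) & connected J1 J2].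

Definition relevant_inf (s : option (I * A)) (K : I) : Prop :=
  s = None \/ exists J a, s = Some (J, a) /\ connected J K.

Variable R : realFieldType.

(* von Stengel--Forges polytope V_T; xi is a function on pairs of
   (possible) sequences, only its values on relevant pairs matter. *)
Definition vSF (xi : option (I * A) -> option (I * A) -> R) : Prop :=
  [/\ (forall s1 s2, is_seq T1 s1 -> is_seq T2 s2 -> relevant s1 s2 ->
         0 <= xi s1 s2),
      xi None None = 1,
      (forall J v s2, info v = Some J -> owner v = Some T1 ->
         is_seq T2 s2 -> relevant_inf s2 J ->
         \sum_(a | inA J a) xi (Some (J, a)) s2 = xi (sigma_at T1 v) s2)
    & (forall K w s1, info w = Some K -> owner w = Some T2 ->
         is_seq T1 s1 -> relevant_inf s1 K ->
         \sum_(b | inA K b) xi s1 (Some (K, b)) = xi s1 (sigma_at T2 w))].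

Definition semi_T1 (xi : option (I * A) -> option (I * A) -> R) : Prop :=
  vSF xi /\ forall s2, is_seq T2 s2 -> xi None s2 = 0 \/ xi None s2 = 1.

Definition semi_T2 (xi : option (I * A) -> option (I * A) -> R) : Prop :=
  vSF xi /\ forall s1, is_seq T1 s1 -> xi s1 None = 0 \/ xi s1 None = 1.

Definition product_plan (xi : option (I * A) -> option (I * A) -> R) : Prop :=
  forall s1 s2, is_seq T1 s1 -> is_seq T2 s2 -> relevant s1 s2 ->
    xi s1 s2 = xi s1 None * xi None s2.

End Game.

From Pilot Require Import Defs.
From mathcomp Require Import all_boot all_order all_algebra.
Set Implicit Arguments. Unset Strict Implicit. Unset Printing Implicit Defensive.
Import Order.TTheory GRing.Theory Num.Theory.

(* The constraints of the von Stengel--Forges polytope are symmetric in the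
   two players, so we work with a plan X over an arbitrary ordered pair of
   players (p, q) and recover the case of Xi*_T2 by transposing X.

   1. Tree facts: the sequence sigma(I) of a node is played at a strict
      ancestor, and strict ancestors are well founded (ancestor induction).
   2. A nonnegative function of p's sequences satisfying p's consistency
      equations decreases along p's sequences: f (J, a) <= f (empty).
   3. If X (empty, t) = 0, then X (s, t) <= X (empty, t) = 0 by (2).
   4. If X (empty, (K, b)) = 1, then the whole parent chain of (K, b) has
      marginal 1 and its siblings have marginal 0, hence row value 0 by (2);
      so X (s, (K, b)) = X (s, sigma(K)) = ... = X (s, empty), by ancestor
      induction along the chain. *)

Section SumBound.
Local Open Scope ring_scope.

Lemma ler_sum_term (T : finType) (R : numDomainType) (P : pred T) (F : T -> R) i :
  P i -> (forall j, P j -> 0 <= F j) -> F i <= \sum_(j | P j) F j.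
Proof.
move=> Pi F_ge0; rewrite (bigD1 i) //= lerDl.
by apply: sumr_ge0 => j /andP[Pj _]; exact: F_ge0.
Qed.

End SumBound.

Section Tree.
Variables (V I A : finType) (G : game V I A).

Local Notation pstep := (fun x => obind (par G) x).

Definition sanc (u v : V) : Prop :=
  exists2 k, (0 < k)%N & iter k pstep (Some v) = Some u.

Definition comparable (u v : V) : Prop := anc G u v \/ anc G v u.

Definition played (p : player) (u : V) (x : I * A) : Prop :=
  [/\ info G u = Some x.1, owner G u = Some p &
      exists c, par G c = Some u /\ act G c = x.2].

Lemma comparable_sym u v : comparable u v -> comparable v u.
Proof. by case; [right|left]. Qed.

Lemma comparable_sanc w u v : sanc u v -> comparable w v -> comparable w u.
Proof.
move=> [k _ Hk] [[m Hm]|[m Hm]].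
- have [Hkm|Hmk] := leqP k m.
    by left; exists (m - k); rewrite -Hk -iterD subnK.
  by right; exists (k - m); rewrite -Hm -iterD subnK // ltnW.
- by right; exists (k + m); rewrite iterD Hm.
Qed.

Lemma played_inA p u J a : played p u (J, a) -> inA G J a.
Proof.
move=> [Hi _ [c [Hc Ha]]]; apply/existsP; exists u; rewrite Hi eqxx /=.
by apply/existsP; exists c; rewrite Hc Ha !eqxx.
Qed.

Lemma is_seq_at p u J a :
  info G u = Some J -> owner G u = Some p -> inA G J a -> is_seq G p (Some (J, a)).
Proof. by move=> Hi Ho Ha; split=> //; exists u. Qed.

Lemma relevant_at {a b : A} v w J K :
  info G v = Some J -> info G w = Some K -> comparable w v ->
  relevant G (Some (J, a)) (Some (K, b)).
Proof. by move=> Hv Hw Hc; right; right; exists J, a, K, b; split=> //; exists v, w. Qed.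

Lemma relevant_inf_at {a : A} v w J K :
  info G v = Some J -> info G w = Some K -> comparable w v ->
  relevant_inf G (Some (J, a)) K.
Proof. by move=> Hv Hw Hc; right; exists J, a; split=> //; exists v, w. Qed.

Lemma relevant_sym s t : relevant G s t -> relevant G t s.
Proof.
case=> [->|[->|[J [a [K [b [-> -> [v [w [Hv Hw Hc]]]]]]]]]]; [by right; left|by left|].
exact: relevant_at Hw Hv (comparable_sym Hc).
Qed.

Lemma mem_hist_aux p n v x :
  x \in hist_aux G p n v -> exists2 u, sanc u v & played p u x.
Proof.
elim: n v => [|n IH] v //=; case Ep: (par G v) => [u0|] //.
have lift : x \in hist_aux G p n u0 -> exists2 u, sanc u v & played p u x.
  move=> /IH [u [k k0 Hk] Hu]; exists u => //.
  by exists k.+1 => //; rewrite iterSr /= Ep.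
case Ei: (info G u0) => [J|]; last exact: lift.
case: ifP => [/eqP Ho|_]; last exact: lift.
rewrite mem_rcons in_cons => /orP[/eqP ->|]; last exact: lift.
by exists u0; [exists 1%N => //=; rewrite Ep | split=> //; exists v].
Qed.

Lemma sigma_at_played p v x :
  sigma_at G p v = Some x -> exists2 u, sanc u v & played p u x.
Proof.
rewrite /sigma_at /last_seq; case E: (hist G p v) => [|y s] //= [<-].
by apply: (@mem_hist_aux p #|V|); rewrite -/(hist G p v) E mem_last.
Qed.

Hypothesis wfG : wf_game G.

Lemma sanc_depth n u v :
  iter n pstep (Some v) = Some (Defs.root G) -> sanc u v ->
  exists2 m, (m < n)%N & iter m pstep (Some u) = Some (Defs.root G).
Proof.
have [[root_par _ _ _ _] _] := wfG.
have iter_None k : iter k pstep None = None by elim: k => //= k ->.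
move=> Hn [k k0 Hk]; have [Hkn|Hnk] := leqP k n.
  exists (n - k); first by rewrite ltn_subrL k0 (leq_trans k0 Hkn).
  by rewrite -Hk -iterD subnK.
have kn_gt0 : (0 < k - n)%N by rewrite subn_gt0.
move: Hk; rewrite -(subnK (ltnW Hnk)) iterD Hn -(prednK kn_gt0).
by rewrite iterSr /= root_par iter_None.
Qed.

Lemma ancestor_ind (P : V -> Prop) :
  (forall v, (forall u, sanc u v -> P u) -> P v) -> forall v, P v.
Proof.
have [[_ root_anc _ _ _] _] := wfG.
move=> IHP v; have [n Hn] := root_anc v.
elim/ltn_ind: n v Hn => n IH v Hn; apply: IHP => u Huv.
have [m mn Hm] := sanc_depth Hn Huv; exact: IH Hm.
Qed.

Lemma is_seq_owner p v J a :
  info G v = Some J -> is_seq G p (Some (J, a)) -> owner G v = Some p.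
Proof.
have [[_ _ _ _ info_owner] _] := wfG.
by move=> Hv [[u [Hu <-]] _]; exact: info_owner Hv Hu.
Qed.

Local Open Scope ring_scope.

Definition vSF_for (R : numDomainType) (p q : player)
  (X : option (I * A) -> option (I * A) -> R) : Prop :=
  [/\ (forall s t, is_seq G p s -> is_seq G q t -> relevant G s t -> 0 <= X s t),
      X None None = 1,
      (forall J v t, info G v = Some J -> owner G v = Some p -> is_seq G q t ->
         relevant_inf G t J ->
         \sum_(a | inA G J a) X (Some (J, a)) t = X (sigma_at G p v) t)
    & (forall K w s, info G w = Some K -> owner G w = Some q -> is_seq G p s ->
         relevant_inf G s K ->
         \sum_(b | inA G K b) X s (Some (K, b)) = X s (sigma_at G q w))].

Lemma vSF_for_transpose (R : numDomainType) p q
    (X : option (I * A) -> option (I * A) -> R) :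
  vSF_for p q X -> vSF_for q p (fun s t => X t s).
Proof.
case=> X_ge0 X_empty X_sum_p X_sum_q; split=> //.
by move=> s t Hs Ht /relevant_sym; exact: X_ge0.
Qed.

Section Decreasing.
Variables (R : numDomainType) (p : player) (f : option (I * A) -> R) (ok : V -> Prop).
Hypothesis ok_up : forall u v, sanc u v -> ok v -> ok u.
Hypothesis f_ge0 : forall J a v, info G v = Some J -> owner G v = Some p -> ok v ->
  inA G J a -> 0 <= f (Some (J, a)).
Hypothesis f_sum : forall J v, info G v = Some J -> owner G v = Some p -> ok v ->
  \sum_(a | inA G J a) f (Some (J, a)) = f (sigma_at G p v).

Lemma sigma_le_empty v J :
  info G v = Some J -> owner G v = Some p -> ok v -> f (sigma_at G p v) <= f None.
Proof.
elim/ancestor_ind: v J => v IH J Hv Ho Hok.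
case E: (sigma_at G p v) => [[J' a']|] //.
have [u Huv Hplay] := sigma_at_played E; have [Hu Hou _] := Hplay.
have Hoku := ok_up Huv Hok; apply: le_trans (IH u Huv J' Hu Hou Hoku).
rewrite -(f_sum Hu Hou Hoku); apply: ler_sum_term (played_inA Hplay) _ => b Hb.
exact: f_ge0 Hu Hou Hoku Hb.
Qed.

Lemma seq_le_empty v J a :
  info G v = Some J -> owner G v = Some p -> ok v -> inA G J a ->
  f (Some (J, a)) <= f None.
Proof.
move=> Hv Ho Hok Ha; apply: le_trans (sigma_le_empty Hv Ho Hok).
rewrite -(f_sum Hv Ho Hok); apply: ler_sum_term Ha _ => b Hb.
exact: f_ge0 Hv Ho Hok Hb.
Qed.

End Decreasing.

Section Plan.
Variables (R : numDomainType) (p q : player) (X : option (I * A) -> option (I * A) -> R).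
Hypothesis HX : vSF_for p q X.

(* A plan entry never exceeds the marginal of its column (step 2 applied to
   the column of (K, b), along the nodes comparable with w). *)
Lemma plan_le_marginal v w J K a b :
  info G v = Some J -> owner G v = Some p -> inA G J a ->
  info G w = Some K -> owner G w = Some q -> inA G K b -> comparable w v ->
  X (Some (J, a)) (Some (K, b)) <= X None (Some (K, b)).
Proof.
have [X_ge0 _ X_sum _] := HX.
move=> Hv Hov Ha Hw How Hb Hwv.
apply: (seq_le_empty (f := fun s => X s (Some (K, b))) (ok := comparable w)
          _ _ _ Hv Hov Hwv Ha).
- by move=> u v'; exact: comparable_sanc.
- move=> J' a' u Hu Hou Hwu Ha'; apply: X_ge0.
  + exact: is_seq_at Hu Hou Ha'.
  + exact: is_seq_at Hw How Hb.
  + exact: relevant_at Hu Hw Hwu.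
- move=> J' u Hu Hou Hwu.
  exact: X_sum _ _ _ Hu Hou (is_seq_at Hw How Hb) (relevant_inf_at Hw Hu (comparable_sym Hwu)).
Qed.

Lemma empty_marginal_le_one w K :
  info G w = Some K -> owner G w = Some q -> X None (sigma_at G q w) <= 1.
Proof.
have [X_ge0 X_empty _ X_sum] := HX.
move=> Hw How; rewrite -X_empty.
apply: (sigma_le_empty (f := X None) (ok := fun=> True) _ _ _ Hw How) => //.
- by move=> J b u Hu Hou _ Hb; apply: X_ge0 => //; [exact: is_seq_at Hu Hou Hb|left].
- by move=> J u Hu Hou _; apply: X_sum => //; left.
Qed.

Lemma marginal_one_parent w K b :
  info G w = Some K -> owner G w = Some q -> inA G K b -> X None (Some (K, b)) = 1 ->
  X None (sigma_at G q w) = 1 /\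
  forall b', inA G K b' -> b' != b -> X None (Some (K, b')) = 0.
Proof.
have [X_ge0 _ _ X_sum] := HX.
move=> Hw How Hb Hone.
have col_ge0 b' : inA G K b' -> 0 <= X None (Some (K, b')).
  by move=> Hb'; apply: X_ge0 => //; [exact: is_seq_at Hw How Hb'|left].
have Hsum : \sum_(b' | inA G K b') X None (Some (K, b')) = X None (sigma_at G q w).
  by apply: X_sum Hw How _ _ => //; left.
have rest : \sum_(b' | inA G K b' && (b' != b)) X None (Some (K, b')) = 0.
  apply: le_anti; rewrite sumr_ge0 ?andbT => [|b' /andP[Hb' _]]; last exact: col_ge0.
  rewrite -(lerD2l 1) addr0 -[X in X + _]Hone -(bigD1 b Hb) Hsum.
  exact: empty_marginal_le_one Hw How.
split; first by rewrite -Hsum (bigD1 b Hb) /= Hone rest addr0.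
move=> b' Hb' ne; apply: (psumr_eq0P _ rest); last by rewrite Hb' ne.
by move=> i /andP[Hi _]; exact: col_ge0.
Qed.

(* Step 4: if the column of (K, b) has marginal 1, every row comparable with
   it is constant along the chain of q's sequences above (K, b). *)
Lemma plan_eq_row_marginal v w J K a b :
  info G v = Some J -> owner G v = Some p -> inA G J a ->
  info G w = Some K -> owner G w = Some q -> inA G K b ->
  comparable w v -> X None (Some (K, b)) = 1 ->
  X (Some (J, a)) (Some (K, b)) = X (Some (J, a)) None.
Proof.
have [X_ge0 _ _ X_sum] := HX.
move=> Hv Hov Ha; elim/ancestor_ind: w K b => w IH K b Hw How Hb Hwv Hone.
have [parent_one sibling_zero] := marginal_one_parent Hw How Hb Hone.
have row_zero b' : inA G K b' -> b' != b -> X (Some (J, a)) (Some (K, b')) = 0.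
  move=> Hb' ne; apply: le_anti; rewrite X_ge0 ?andbT.
  - rewrite -(sibling_zero b' Hb' ne).
    exact: plan_le_marginal Hv Hov Ha Hw How Hb' Hwv.
  - exact: is_seq_at Hv Hov Ha.
  - exact: is_seq_at Hw How Hb'.
  - exact: relevant_at Hv Hw Hwv.
have -> : X (Some (J, a)) (Some (K, b)) = X (Some (J, a)) (sigma_at G q w).
  rewrite -(X_sum _ _ _ Hw How (is_seq_at Hv Hov Ha) (relevant_inf_at Hv Hw Hwv)).
  by rewrite (bigD1 b Hb) /= big1 ?addr0 // => b' /andP[]; exact: row_zero.
case E: (sigma_at G q w) parent_one => [[K' b']|] // one'.
have [u Huw Hplay] := sigma_at_played E; have [Hu Hou _] := Hplay.
have Huv : comparable u v by apply/comparable_sym/(comparable_sanc Huw)/comparable_sym.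
exact: IH Huw K' b' Hu Hou (played_inA Hplay) Huv one'.
Qed.

Lemma plan_product_for :
  (forall t, is_seq G q t -> X None t = 0 \/ X None t = 1) ->
  forall s t, is_seq G p s -> is_seq G q t -> relevant G s t ->
    X s t = X s None * X None t.
Proof.
have [X_ge0 X_empty _ _] := HX.
move=> H01 s t Hs Ht Hst.
case: (Hst) => [->|[->|[J [a [K [b [Es Et [v [w [Hv Hw Hwv]]]]]]]]]].
- by rewrite X_empty mul1r.
- by rewrite X_empty mulr1.
subst s t; have Hov := is_seq_owner Hv Hs; have How := is_seq_owner Hw Ht.
have [_ Ha] := Hs; have [_ Hb] := Ht.
case: (H01 _ Ht) => Hcol; rewrite Hcol ?mulr0 ?mulr1.
- apply: le_anti; rewrite X_ge0 // andbT -Hcol.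
  exact: plan_le_marginal Hv Hov Ha Hw How Hb Hwv.
- exact: plan_eq_row_marginal Hv Hov Ha Hw How Hb Hwv Hcol.
Qed.

End Plan.
End Tree.

Theorem mainTheorem5 (V I A : finType) (G : game V I A) (R : realFieldType)
  (xi : option (I * A) -> option (I * A) -> R) :
  wf_game G -> semi_T1 G xi \/ semi_T2 G xi -> product_plan G xi.
Proof.
move=> wf [[HX H01]|[HX H01]] s1 s2 Hs1 Hs2 Hrel.
- exact: (plan_product_for wf HX H01).
- have := plan_product_for wf (vSF_for_transpose HX) H01 Hs2 Hs1 (relevant_sym Hrel).
  by rewrite mulrC.
Qed.
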